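(* Let $(\Omega,\mathcal{F},\mathbf{P})$ be a probability space with $\sigma$-fields $\{\emptyset,\Omega\}=\mathcal{F}_0\subseteq\mathcal{F}_1\subseteq\cdots\subseteq\mathcal{F}_n\subseteq\mathcal{F}$, and let $(\xi_i,\mathcal{F}_i)_{i=1,\dots,n}$ be a sequence of supermartingale differences, i.e. each $\xi_i$ is real-valued, $\mathcal{F}_i$-measurable, integrable, and $\mathbf{E}(\xi_i\mid\mathcal{F}_{i-1})\le 0$. Let $\beta\in(1,2)$ be a constant and assume $\mathbf{E}|\xi_i|^\beta<\infty$ for all $i\in[1,n]$. Let $S_k=\sum_{i=1}^k\xi_i$ and \[ \mathrm{G}^0_k(\beta)=\sum_{i=1}^k\Big(\mathbf{E}\big((\xi_i^-)^\beta\mid\mathcal{F}_{i-1}\big)+(\xi_i^+)^\beta\Big),\qquad k\in[1,n], \] where $x^+=\max\{x,0\}$ and $x^-=-\min\{x,0\}$. Then for all $x,v>0$, \[ \mathbf{P}\Big(S_k\ge x\ \text{and}\ \mathrm{G}^0_k(\beta)\le v^\beta\ \text{for some}\ k\in[1,n]\Big)\le\exp\left\{-C(\beta)\left(\frac{x}{v}\right)^{\frac{\beta}{\beta-1}}\right\}, \] where $C(\beta)=\beta^{\frac{1}{1-\beta}}\left(1-\beta^{-1}\right)$. *)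

From HB Require Import structures.
From mathcomp Require Import all_boot all_order all_algebra.
From mathcomp Require Import all_classical all_reals all_analysis.
Set Implicit Arguments. Unset Strict Implicit. Unset Printing Implicit Defensive.
Import Order.TTheory GRing.Theory Num.Theory.
Import numFieldNormedType.Exports.
Local Open Scope classical_set_scope.
Local Open Scope ring_scope.

Definition sub_sigma_field d (T : measurableType d) (G : set (set T)) : Prop :=
  sigma_algebra setT G /\ G `<=` measurable.

Definition G_measurable d (T : measurableType d) (R : realType)
  (G : set (set T)) (Y : T -> R) : Prop :=
  forall B : set R, measurable B -> G (Y @^-1` B).

Definition is_cond_exp d (T : measurableType d) (R : realType)
  (P : probability T R) (G : set (set T)) (X Y : T -> R) : Prop :=
  [/\ G_measurable G Y,
      P.-integrable setT (EFin \o Y) &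
      forall A, G A ->
        (\int[P]_(w in A) (Y w)%:E = \int[P]_(w in A) (X w)%:E)%E].

Definition pos_part (R : realType) (x : R) : R := Num.max x 0.
Definition neg_part (R : realType) (x : R) : R := - Num.min x 0.

From HB Require Import structures.
From mathcomp Require Import all_boot all_order all_algebra.
From mathcomp Require Import all_classical all_reals all_analysis.
From mathcomp Require Import ring lra measurable_realfun.
From mathcomp Require finmap.
Set Implicit Arguments. Unset Strict Implicit. Unset Printing Implicit Defensive.
Import Order.TTheory GRing.Theory Num.Theory.
Import numFieldNormedType.Exports.
Local Open Scope classical_set_scope.
Local Open Scope ring_scope.

(* For lam > 0 and c = lam^beta, the process Z_k = exp(lam S_k - c G0_k(beta))
   is a nonnegative supermartingale with Z_0 = 1.  Indeed, the elementary
   inequality exp(y - (y^+)^beta) <= 1 + y + (y^-)^beta at y = lam xi_i shows,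
   after conditioning on F_{i-1}, that the multiplicative increment of Z has
   conditional expectation at most exp(-c V) (1 + c V) <= 1, where
   V = E((xi_i^-)^beta | F_{i-1}).  On the event of the theorem some Z_k is at
   least exp(lam x - c v^beta), so Ville's maximal inequality bounds its
   probability by exp(-(lam x - lam^beta v^beta)); the optimal lam gives
   C(beta) (x/v)^(beta/(beta-1)). *)

Section pos_neg_part.
Variable R : realType.
Implicit Types a l : R.

Lemma pos_part_ge0 a : 0 <= pos_part a.
Proof. by rewrite /pos_part le_max lexx orbT. Qed.

Lemma neg_part_ge0 a : 0 <= neg_part a.
Proof. by rewrite /neg_part oppr_ge0 ge_min lexx orbT. Qed.

Lemma pos_part_id a : 0 <= a -> pos_part a = a.
Proof. by move=> a0; apply/max_idPl. Qed.

Lemma neg_part_id a : a <= 0 -> neg_part a = - a.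
Proof. by move=> a0; rewrite /neg_part; congr (- _); apply/min_idPl. Qed.

Lemma pos_part_eq0 a : a <= 0 -> pos_part a = 0.
Proof. by move=> a0; apply/max_idPr. Qed.

Lemma neg_part_eq0 a : 0 <= a -> neg_part a = 0.
Proof. by move=> a0; rewrite /neg_part (min_idPr a0) oppr0. Qed.

Lemma pos_partZ l a : 0 < l -> pos_part (l * a) = l * pos_part a.
Proof.
move=> l0; have [a0|a0] := leP 0 a.
  by rewrite !pos_part_id // mulr_ge0 // ltW.
by have a0' := ltW a0; rewrite !pos_part_eq0 ?mulr0 // pmulr_rle0.
Qed.

Lemma neg_partZ l a : 0 < l -> neg_part (l * a) = l * neg_part a.
Proof.
move=> l0; have [a0|a0] := leP 0 a.
  by rewrite !neg_part_eq0 ?mulr0 // mulr_ge0 // ltW.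
by have a0' := ltW a0; rewrite !neg_part_id ?mulrN // pmulr_rle0.
Qed.

End pos_neg_part.

Lemma sqr_le_powR (R : realType) (a b : R) : 0 <= a <= 1 -> b <= 2 -> a ^+ 2 <= a `^ b.
Proof.
move=> /andP[a0 a1] b2; have [->|an0] := eqVneq a 0.
  by rewrite expr2 mul0r powR_ge0.
rewrite -powR_mulrn //; apply: ger_powR => //.
by rewrite a1 lt_neqAle eq_sym an0 a0.
Qed.

Lemma expR_le_of_mul1B (R : realType) (a c : R) :
  0 <= c -> 1 <= c * (1 - a) -> expR a <= c.
Proof.
move=> c0 h; have e := expR_ge1Dx (- a).
have E : expR a * expR (- a) = 1 by rewrite -expRD subrr expR0.
have := expR_gt0 a; have := expR_gt0 (- a); nra.
Qed.

Lemma expR_sub_pos_part_powR_le (R : realType) (b y : R) : 1 < b < 2 ->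
  expR (y - pos_part y `^ b) <= 1 + y + neg_part y `^ b.
Proof.
move=> /andP[b1 b2]; have b0 : b != 0 by rewrite gt_eqF // (lt_trans ltr01).
have [y0|y0] := leP 0 y.
  rewrite pos_part_id // neg_part_eq0 // powR0 // addr0.
  have [y1|y1] := leP 1 y.
    have : y <= y `^ b by apply: le1r_powR => //; exact: ltW.
    move=> h; apply: (le_trans (y := expR 0)); first by rewrite ler_expR; lra.
    by rewrite expR0; lra.
  have : y ^+ 2 <= y `^ b by apply: sqr_le_powR; [lra | exact: ltW].
  move=> hs; apply: (le_trans (y := expR (y - y ^+ 2))); first by rewrite ler_expR; lra.
  apply: expR_le_of_mul1B; first lra.
  have : 0 <= y ^+ 3 by rewrite exprn_ge0.
  rewrite !exprS expr0 !mulr1; nra.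
have yn : y <= 0 by exact: ltW.
rewrite pos_part_eq0 // neg_part_id // powR0 // subr0.
have [y1|y1] := leP (-1) y.
  have : (- y) ^+ 2 <= (- y) `^ b by apply: sqr_le_powR; [lra | exact: ltW].
  rewrite sqrrN => hs; apply: (le_trans (y := 1 + y + y ^+ 2)); last lra.
  apply: expR_le_of_mul1B; rewrite expr2; nra.
have : - y <= (- y) `^ b by apply: le1r_powR; lra.
move=> h; apply: (le_trans (y := expR 0)); first by rewrite ler_expR.
by rewrite expR0; lra.
Qed.

Lemma expRN_mul_max1D_le1 (R : realType) (u : R) : expR (- u) * Num.max (1 + u) 0 <= 1.
Proof.
have [h|h] := leP (1 + u) 0; first by rewrite mulr0.
have e := expR_ge1Dx u; have E : expR (- u) * expR u = 1 by rewrite -expRD addNr expR0.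
have := expR_gt0 (- u); nra.
Qed.

Section sub_sigma_field.
Context d (T : measurableType d) (R : realType) (G : set (set T)).
Hypotheses (sG : sigma_algebra setT G) (GT : G `<=` measurable).
Local Notation T' := (g_sigma_algebraType G).

Lemma g_measurableE (A : set T) : @measurable _ T' A = G A.
Proof. by rewrite (measurable_g_measurableTypeE sG). Qed.

Lemma G_measurableP (f : T -> R) :
  G_measurable G f <-> measurable_fun (setT : set T') f.
Proof.
split=> [mf _ B mB|mf B mB]; first by rewrite setTI g_measurableE; exact: mf.
by rewrite -g_measurableE -[_ @^-1` _]setTI; exact: mf.
Qed.

Lemma sub_measurable_funW (f : T -> R) :
  measurable_fun (setT : set T') f -> measurable_fun setT f.
Proof.
move=> mf _ B mB; rewrite setTI; apply: GT; rewrite -g_measurableE.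
by have := mf measurableT B mB; rewrite setTI.
Qed.

Variable P : probability T R.

Lemma integral_affine (A : set T) (c a b : R) (f g : T -> R) :
  measurable A -> P.-integrable setT (EFin \o f) -> P.-integrable setT (EFin \o g) ->
  (\int[P]_(w in A) (c + a * f w + b * g w)%:E =
   \int[P]_(w in A) (EFin \o cst c) w + a%:E * \int[P]_(w in A) (f w)%:E
     + b%:E * \int[P]_(w in A) (g w)%:E)%E.
Proof.
move=> mA iF iG.
have iFA : P.-integrable A (EFin \o f) := integrableS measurableT mA (subsetT _) iF.
have iGA : P.-integrable A (EFin \o g) := integrableS measurableT mA (subsetT _) iG.
have ic : P.-integrable A (EFin \o cst c) := finite_measure_integrable_cst P c mA.
have iaf : P.-integrable A (fun w => a%:E * (EFin \o f) w)%E := integrableZl mA a iFA.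
have ibg : P.-integrable A (fun w => b%:E * (EFin \o g) w)%E := integrableZl mA b iGA.
under eq_integral do rewrite !EFinD !EFinM.
rewrite integralD //; last exact: integrableD.
by rewrite integralD // !integralZl.
Qed.

Lemma integrable_affine (c a b : R) (f g : T -> R) :
  P.-integrable setT (EFin \o f) -> P.-integrable setT (EFin \o g) ->
  P.-integrable setT (EFin \o (fun w => c + a * f w + b * g w)).
Proof.
move=> iF iG; have ic := finite_measure_integrable_cst P c measurableT.
have := integrableD measurableT
  (integrableD measurableT ic (integrableZl measurableT a iF)) (integrableZl measurableT b iG).
by apply: eq_integrable => // w _; rewrite /= !EFinD !EFinM.
Qed.

Lemma is_cond_exp_affine (c a b : R) (X1 X2 Y1 Y2 : T -> R) :
  P.-integrable setT (EFin \o X1) -> P.-integrable setT (EFin \o X2) ->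
  is_cond_exp P G X1 Y1 -> is_cond_exp P G X2 Y2 ->
  is_cond_exp P G (fun w => c + a * X1 w + b * X2 w) (fun w => c + a * Y1 w + b * Y2 w).
Proof.
move=> iX1 iX2 [mY1 iY1 hY1] [mY2 iY2 hY2]; split.
- move/G_measurableP : mY1 => mY1; move/G_measurableP : mY2 => mY2.
  apply/G_measurableP; apply: measurable_funD; last exact: measurable_funM.
  by apply: measurable_funD; [exact: measurable_cst | exact: measurable_funM].
- exact: integrable_affine.
- by move=> A GA; have mA := GT GA; rewrite !integral_affine // hY1 // hY2.
Qed.

Lemma cond_exp_integrable (X Y : T -> R) :
  (forall w, 0 <= X w) -> measurable_fun setT X -> is_cond_exp P G X Y ->
  P.-integrable setT (EFin \o X).
Proof.
move=> X0 mX [_ iY hXY]; apply/integrableP; split; first exact/measurable_EFinP.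
under eq_integral do rewrite /= ger0_norm //.
rewrite -hXY; last by rewrite -g_measurableE.
by rewrite ltey_eq (integrable_fin_num measurableT iY).
Qed.

Lemma integral_le_max0 (A : set T) (Y : T -> R) :
  (\int[P]_(w in A) (Y w)%:E <= \int[P]_(w in A) (Num.max (Y w) 0)%:E)%E.
Proof.
rewrite integralE.
have -> : (\int[P]_(w in A) (Num.max (Y w) 0)%:E = \int[P]_(w in A) (EFin \o Y)^\+ w)%E.
  by apply: eq_integral => w _; rewrite funeposE /= EFin_max.
rewrite -[leRHS]sube0; apply: leeB => //.
by apply: integral_ge0 => w _; exact: funeneg_ge0.
Qed.

Import HBNNSimple.

Lemma nnsfun_range_ge0 (f : {nnsfun T' >-> R}) (i : nat) :
  (i < size (finmap.enum_fset (fset_set (range f))))%N ->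
  0 <= (finmap.enum_fset (fset_set (range f)))`_i.
Proof.
move=> /(mem_nth 0); rewrite in_fset_set; last exact: fimfunP.
by move=> /set_mem [w _ <-]; exact: fun_ge0.
Qed.

Lemma integral_nnsfun_mul (f : {nnsfun T' >-> R}) (Z : T -> R) :
  (forall w, 0 <= Z w) -> measurable_fun setT Z ->
  let s := finmap.enum_fset (fset_set (range f)) in
  (\int[P]_w (f w * Z w)%:E = \sum_(i < size s) (s`_i)%:E *
      \int[P]_(w in (f : T -> R) @^-1` [set s`_i]) (Z w)%:E)%E.
Proof.
move=> Z0 mZ s.
have mA i : measurable ((f : T -> R) @^-1` [set s`_i]).
  by apply: GT; rewrite -g_measurableE; exact: (measurable_funPTI f (measurable_set1 _)).
have s0 (i : 'I_(size s)) : 0 <= s`_i by apply: nnsfun_range_ge0.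
under eq_integral => w _ do rewrite (fimfunEord f w) mulr_suml -sumEFin.
rewrite ge0_integral_sum //; last first.
  by move=> i w _; rewrite lee_fin !mulr_ge0.
  move=> i; apply/measurable_EFinP; apply: measurable_funM => //.
  by apply: measurable_funM => //; exact: measurable_indic.
apply: eq_bigr => i _.
under eq_integral do rewrite -mulrA EFinM.
rewrite ge0_integralZl //; last 2 first.
- by move=> w _; rewrite lee_fin mulr_ge0 // indicE.
- by rewrite lee_fin.
congr (_ * _)%E; rewrite [in RHS]integral_mkcond; apply: eq_integral => w _.
rewrite /patch indicE; case: ifP => _; rewrite ?mul1r ?mul0r //.
by apply/measurable_EFinP; apply: measurable_funM => //; exact: measurable_indic.
Qed.

(* [H] may be unbounded, so [H * Y] need not be integrable: [H] is approximated
   from below by [G]-simple functions, for which the inequality is the defining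
   property of [Y], and the positive part of [Y] keeps every integrand
   nonnegative for monotone convergence. *)
Lemma cond_exp_take_out_le (H X Y : T -> R) :
  (forall w, 0 <= H w) -> measurable_fun (setT : set T') H ->
  (forall w, 0 <= X w) -> P.-integrable setT (EFin \o X) -> is_cond_exp P G X Y ->
  (\int[P]_w (H w * X w)%:E <= \int[P]_w (H w * Num.max (Y w) 0)%:E)%E.
Proof.
move=> H0 mH X0 iX [_ iY hXY].
have mX : measurable_fun setT X by apply/measurable_EFinP; exact: measurable_int iX.
have mY : measurable_fun setT Y by apply/measurable_EFinP; exact: measurable_int iY.
have mM : measurable_fun setT (fun w => Num.max (Y w) 0).
  by apply: measurable_maxr => //; exact: measurable_cst.
have M0 w : 0 <= Num.max (Y w) 0 by rewrite le_max lexx orbT.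
have mH' : measurable_fun (setT : set T') (EFin \o H) by exact/measurable_EFinP.
pose h := nnsfun_approx (@measurableT _ T') mH'.
have hH k w : h k w <= H w.
  rewrite -lee_fin /h nnsfun_approxE; apply: le_approx => //.
  by move=> x _; rewrite lee_fin.
have mh k : measurable_fun setT (h k : T -> R).
  exact: sub_measurable_funW (measurable_funPT (h k)).
have simple_le k : (\int[P]_w (h k w * X w)%:E <= \int[P]_w (H w * Num.max (Y w) 0)%:E)%E.
  apply: (le_trans (y := \int[P]_w (h k w * Num.max (Y w) 0)%:E)%E).
    rewrite (integral_nnsfun_mul (h k) X0 mX) (integral_nnsfun_mul (h k) M0 mM).
    apply: lee_sum => i _; apply: lee_wpmul2l; first by rewrite lee_fin nnsfun_range_ge0.
    rewrite -hXY; first exact: integral_le_max0.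
    by rewrite -g_measurableE; exact: (measurable_funPTI (h k) (measurable_set1 _)).
  apply: ge0_le_integral => //.
  - by move=> w _; rewrite lee_fin mulr_ge0.
  - by apply/measurable_EFinP; exact: measurable_funM.
  - by apply/measurable_EFinP; apply: measurable_funM => //; exact: sub_measurable_funW.
  - by move=> w _; rewrite lee_fin ler_wpM2r.
have mg k : measurable_fun (setT : set T) (fun w : T => (h k w * X w)%:E).
  by apply/measurable_EFinP; exact: measurable_funM.
have g0 k (w : T) : setT w -> (0 <= (h k w * X w)%:E)%E by move=> _; rewrite lee_fin mulr_ge0.
have ndg (w : T) : setT w -> {homo (fun k => (h k w * X w)%:E) : a b / (a <= b)%N >-> (a <= b)%E}.
  move=> _ a b ab; rewrite lee_fin ler_wpM2r //.
  by have := nd_nnsfun_approx (@measurableT _ T') mH' ab => /lefP.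
have cv := @cvg_monotone_convergence _ T R P setT measurableT _ mg g0 ndg.
have lim_eq w : limn (fun k => (h k w * X w)%:E) = (H w * X w)%:E.
  apply/cvg_lim => //.
  have c1 := @cvg_nnsfun_approx _ T' R setT measurableT (EFin \o H) mH' (fun x _ => H0 x) w I.
  have c2 := cvgeZr (y := (X w)%:E) (fin_numE _) c1.
  by rewrite EFinM; under eq_fun do rewrite EFinM.
under eq_integral do rewrite -lim_eq.
rewrite -(cvg_lim _ cv) //; apply: lime_le; first by apply/cvg_ex; eexists; exact: cv.
by apply: nearW => k; exact: simple_le.
Qed.

Lemma cond_exp_expR_increment_le (b lam : R) (H xi Yx Yn : T -> R) :
  1 < b < 2 -> 0 < lam ->
  (forall w, 0 <= H w) -> measurable_fun (setT : set T') H ->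
  P.-integrable setT (EFin \o xi) -> is_cond_exp P G xi Yx ->
  is_cond_exp P G (fun w => neg_part (xi w) `^ b) Yn ->
  (\int[P]_w (H w * expR (lam * xi w - lam `^ b * pos_part (xi w) `^ b))%:E
   <= \int[P]_w (H w * Num.max (1 + lam * Yx w + lam `^ b * Yn w) 0)%:E)%E.
Proof.
move=> hb lam0 H0 mH ixi cYx cYn; set c := lam `^ b.
pose X w := 1 + lam * xi w + c * neg_part (xi w) `^ b.
have mxi : measurable_fun setT xi by apply/measurable_EFinP; exact: measurable_int ixi.
have mneg : measurable_fun setT (fun w => neg_part (xi w) `^ b).
  apply: (measurableT_comp (measurable_powR b)); apply: measurable_funN.
  by apply: measurable_minr => //; exact: measurable_cst.
have ineg := cond_exp_integrable (fun w => powR_ge0 _ _) mneg cYn.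
have iX : P.-integrable setT (EFin \o X) by exact: integrable_affine.
have expR_le_X w : expR (lam * xi w - c * pos_part (xi w) `^ b) <= X w.
  have := expR_sub_pos_part_powR_le (lam * xi w) hb.
  by rewrite pos_partZ // neg_partZ // !powRM ?pos_part_ge0 ?neg_part_ge0 // ltW.
have X0 w : 0 <= X w by apply: le_trans (expR_le_X w); exact: ltW (expR_gt0 _).
have mHT := sub_measurable_funW mH.
apply: le_trans (cond_exp_take_out_le H0 mH X0 iX (is_cond_exp_affine _ _ _ ixi ineg cYx cYn)).
apply: ge0_le_integral => //.
- by move=> w _; rewrite lee_fin mulr_ge0 // ltW // expR_gt0.
- apply/measurable_EFinP; apply: measurable_funM => //.
  apply: measurableT_comp; first exact: measurable_expR.
  apply: measurable_funB; first by apply: measurable_funM => //; exact: measurable_cst.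
  apply: measurable_funM; first exact: measurable_cst.
  apply: (measurableT_comp (measurable_powR b)).
  by apply: measurable_maxr => //; exact: measurable_cst.
- apply/measurable_EFinP; apply: measurable_funM => //.
  by apply/measurable_EFinP; exact: measurable_int iX.
- by move=> w _; rewrite lee_fin ler_wpM2l.
Qed.

Lemma exp_supermartingale_step (b lam : R) (H xi Yx Yn : T -> R) :
  1 < b < 2 -> 0 < lam ->
  (forall w, 0 <= H w) -> measurable_fun (setT : set T') H ->
  P.-integrable setT (EFin \o xi) ->
  is_cond_exp P G xi Yx -> {ae P, forall w, Yx w <= 0} ->
  is_cond_exp P G (fun w => neg_part (xi w) `^ b) Yn ->
  (\int[P]_w (H w * expR (lam * xi w - lam `^ b * (Yn w + pos_part (xi w) `^ b)))%:E
   <= \int[P]_w (H w)%:E)%E.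
Proof.
move=> hb lam0 H0 mH ixi cYx aeY cYn; set c := lam `^ b.
pose H' w := H w * expR (- (c * Yn w)).
pose Y w := 1 + lam * Yx w + c * Yn w.
have [mYnG _ _] := cYn; move/G_measurableP : mYnG => mYnG.
have [mYx _ _] := cYx; move/G_measurableP : mYx => mYx.
have H'0 w : 0 <= H' w by rewrite mulr_ge0 // ltW // expR_gt0.
have mH' : measurable_fun (setT : set T') H'.
  apply: measurable_funM => //; apply: measurableT_comp; first exact: measurable_expR.
  by apply: measurable_funN; apply: measurable_funM => //; exact: measurable_cst.
have mY : measurable_fun (setT : set T') Y.
  apply: measurable_funD; last by apply: measurable_funM => //; exact: measurable_cst.
  by apply: measurable_funD; [exact: measurable_cst | apply: measurable_funM => //; exact: measurable_cst].
under eq_integral => w _.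
  rewrite (_ : lam * xi w - c * (Yn w + pos_part (xi w) `^ b)
             = - (c * Yn w) + (lam * xi w - c * pos_part (xi w) `^ b)); last by ring.
  rewrite expRD mulrA -/(H' w); over.
apply: le_trans (cond_exp_expR_increment_le hb lam0 H'0 mH' ixi cYx cYn) _.
apply: ae_ge0_le_integral => //.
- by move=> w _; rewrite lee_fin mulr_ge0 // le_max lexx orbT.
- apply/measurable_EFinP; apply: measurable_funM; first exact: sub_measurable_funW.
  apply: measurable_maxr; last exact: measurable_cst.
  exact: sub_measurable_funW.
- by move=> w _; rewrite lee_fin.
- exact/measurable_EFinP/sub_measurable_funW.
apply: filterS aeY => w hw _; rewrite lee_fin /H' -mulrA -[leRHS]mulr1.
apply: ler_wpM2l => //; apply: le_trans (expRN_mul_max1D_le1 (c * Yn w)).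
apply: ler_wpM2l; first exact: ltW (expR_gt0 _).
rewrite ge_max !le_max lexx orbT andbT; apply/orP; left.
by rewrite lerD2r gerDl pmulr_rle0.
Qed.

End sub_sigma_field.

Section filtration.
Context d (T : measurableType d) (R : realType) (n : nat) (F : nat -> set (set T)).
Hypotheses (sF : forall k, (k <= n)%N -> sub_sigma_field (F k))
  (FS : forall k, (k < n)%N -> F k `<=` F k.+1).

Let sigmaF k (kn : (k <= n)%N) : sigma_algebra setT (F k) := proj1 (sF kn).
Let subF k (kn : (k <= n)%N) : F k `<=` measurable := proj2 (sF kn).

Lemma filtration_mono i j : (i <= j)%N -> (j <= n)%N -> F i `<=` F j.
Proof.
move=> ij jn A; elim: j ij jn => [|j IH]; first by rewrite leqn0 => /eqP ->.
rewrite leq_eqVlt => /predU1P[-> //|ij] jn /(IH ij (ltnW jn)); exact: FS.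
Qed.

Lemma G_measurable_filtration i j (f : T -> R) : (i <= j)%N -> (j <= n)%N ->
  G_measurable (F i) f -> G_measurable (F j) f.
Proof. by move=> ij jn mf B /mf; exact: filtration_mono. Qed.

Lemma G_measurable_partial_sum (f : nat -> T -> R) k : (k <= n)%N ->
  (forall i, (1 <= i <= k)%N -> G_measurable (F i) (f i)) ->
  G_measurable (F k) (fun w => \sum_(1 <= i < k.+1) f i w).
Proof.
elim: k => [|k IH] kn mf.
  apply/(G_measurableP (sigmaF kn)).
  by under eq_fun do rewrite big_geq //; exact: measurable_cst.
have mS : G_measurable (F k.+1) (fun w => \sum_(1 <= i < k.+1) f i w).
  apply: (G_measurable_filtration (leqnSn k) kn); apply: IH (ltnW kn) _ => i /andP[i1 ik].
  by apply: mf; rewrite i1 (leq_trans ik).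
apply/(G_measurableP (sigmaF kn)); under eq_fun do rewrite big_nat_recr //=.
by apply: measurable_funD; apply/(G_measurableP (sigmaF kn)) => //; apply: mf; rewrite leqnn.
Qed.

Section maximal_inequality.
Variables (P : probability T R) (Z : nat -> T -> R) (c : R).
Hypotheses (Z0 : forall k w, 0 <= Z k w)
  (adaptedZ : forall k, (k <= n)%N -> G_measurable (F k) (Z k))
  (superZ : forall k B, (k < n)%N -> F k B ->
     (\int[P]_w (\1_B w * Z k.+1 w)%:E <= \int[P]_w (\1_B w * Z k w)%:E)%E).

Let hit k := [set w | c <= Z k w].
Let unhit k := [set w | forall j, (j < k)%N -> Z j w < c].
Let first_hit k := unhit k `&` hit k.

Let unhit0 : unhit 0 = setT.
Proof. by apply/seteqP; split => // w _ j; rewrite ltn0. Qed.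

Let F_hit k : (k <= n)%N -> F k (hit k).
Proof.
move=> kn; have -> : hit k = Z k @^-1` `[c, +oo[%classic.
  by apply/seteqP; split => w; rewrite /= in_itv /= andbT.
exact: adaptedZ kn _ (measurable_itv _).
Qed.

Let unhitS k : unhit k.+1 = unhit k `\` hit k.
Proof.
apply/seteqP; split => w /=.
  move=> h; split => [j jk|]; first by apply: h; exact: ltnW.
  by apply/negP; rewrite -ltNge; exact: h.
move=> [h /negP]; rewrite -ltNge => hk j.
by rewrite ltnS leq_eqVlt => /predU1P[->//|/h].
Qed.

Let F_unhit k : (k <= n)%N -> F k (unhit k.+1).
Proof.
elim: k => [|k IH] kn; rewrite unhitS -(g_measurableE (sigmaF kn)).
  by rewrite unhit0; apply: measurableD => //; rewrite (g_measurableE (sigmaF kn)); exact: F_hit.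
apply: measurableD; rewrite (g_measurableE (sigmaF kn)); last exact: F_hit.
exact: filtration_mono (leqnSn k) kn _ (IH (ltnW kn)).
Qed.

Let measurable_hit k : (k <= n)%N -> measurable (hit k).
Proof. by move=> kn; exact: subF kn _ (F_hit kn). Qed.

Let measurable_unhit k : (k <= n.+1)%N -> measurable (unhit k).
Proof. by case: k => [_|k kn]; [rewrite unhit0 | exact: subF kn _ (F_unhit kn)]. Qed.

Let measurable_first_hit k : (k <= n)%N -> measurable (first_hit k).
Proof.
by move=> kn; apply: measurableI; [apply: measurable_unhit; exact: leqW | exact: measurable_hit].
Qed.

Let measurable_indicZ (A : set T) k : (k <= n)%N -> measurable A ->
  measurable_fun setT (fun w => (\1_A w * Z k w)%:E).
Proof.
move=> kn mA; apply/measurable_EFinP; apply: measurable_funM; first exact: measurable_indic.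
apply: (sub_measurable_funW (sigmaF kn) (subF kn)).
by apply/(G_measurableP (sigmaF kn)); exact: adaptedZ.
Qed.

Let integral_unhit_split k : (k <= n)%N ->
  (\int[P]_w (\1_(first_hit k) w * Z k w)%:E + \int[P]_w (\1_(unhit k.+1) w * Z k w)%:E
   = \int[P]_w (\1_(unhit k) w * Z k w)%:E)%E.
Proof.
move=> kn; have ge0 (A : set T) w : setT w -> (0 <= (\1_A w * Z k w)%:E)%E.
  by move=> _; rewrite lee_fin mulr_ge0.
rewrite -ge0_integralD //; try exact: ge0.
- apply: eq_integral => w _; rewrite -EFinD -mulrDl unhitS /first_hit !indicE in_setI in_setD.
  by case: (w \in unhit k); case: (w \in hit k); rewrite /= ?(addr0, add0r, mul0r, mul1r).
- exact: measurable_indicZ (measurable_first_hit kn).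
- exact: measurable_indicZ kn (@measurable_unhit k.+1 kn).
Qed.

(* What has been banked at the first hitting times up to [m], plus the mass
   still in play, never exceeds the initial mass. *)
Let banked m := (\sum_(k < m.+1) \int[P]_w (\1_(first_hit k) w * Z k w)%:E
  + \int[P]_w (\1_(unhit m.+1) w * Z m w)%:E)%E.

Let banked_le m : (m <= n)%N -> (banked m <= \int[P]_w (Z 0%N w)%:E)%E.
Proof.
elim: m => [n0|m IH mn].
  rewrite /banked big_ord1 integral_unhit_split // unhit0.
  by under eq_integral do rewrite indicT mul1r.
apply: le_trans (IH (ltnW mn)); rewrite /banked big_ord_recr /= -addeA.
rewrite integral_unhit_split //; apply: leeD2l; apply: (superZ mn).
exact: F_unhit (ltnW mn).
Qed.

Lemma measurable_crossing : measurable [set w | exists2 k, (k <= n)%N & c <= Z k w].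
Proof.
have -> : [set w | exists2 k, (k <= n)%N & c <= Z k w]
    = \bigcup_(k in [set k | (k <= n)%N]) hit k.
  by apply/seteqP; split => w /= [k kn h]; exists k.
by apply: bigcup_measurable => k; exact: measurable_hit.
Qed.

Lemma supermartingale_maximal_ineq : 0 < c ->
  (c%:E * P [set w | exists2 k, (k <= n)%N & (c <= Z k w)%R] <= \int[P]_w (Z 0%N w)%:E)%E.
Proof.
move=> c0; set E := [set w | _]; have mE : measurable E := measurable_crossing.
have ge0 k w : 0 <= \1_(first_hit k) w * Z k w by rewrite mulr_ge0.
have pointwise w : c * \1_E w <= \sum_(k < n.+1) \1_(first_hit k) w * Z k w.
  rewrite indicE; case: (boolP (w \in E)) => [/set_mem [k kn hk]|_]; last first.
    by rewrite mulr0 sumr_ge0.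
  have ex : exists k, (k <= n)%N && (c <= Z k w) by exists k; rewrite kn.
  case: (ex_minnP ex) => m /andP[mn hm] minm.
  rewrite mulr1 (bigD1 (Ordinal (mn : (m < n.+1)%N))) //= indicE mem_set; last first.
    split=> // j jm; rewrite ltNge; apply/negP => hj.
    by have := minm j; rewrite (leq_trans (ltnW jm) mn) hj leqNgt jm => /(_ isT).
  by rewrite mul1r; apply: le_trans hm _; rewrite lerDl sumr_ge0.
have -> : (c%:E * P E = \int[P]_w (c * \1_E w)%:E)%E.
  under eq_integral do rewrite EFinM.
  rewrite ge0_integralZl ?integral_indic ?setIT ?lee_fin ?ltW //.
  by apply/measurable_EFinP; exact: measurable_indic.
apply: le_trans (banked_le (leqnn n)); rewrite /banked.
apply: (le_trans _ (leeDl _ _)); last first.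
  by apply: integral_ge0 => w _; rewrite lee_fin mulr_ge0.
have mfirst (k : 'I_n.+1) :=
  measurable_indicZ (ltn_ord k) (measurable_first_hit (ltn_ord k)).
apply: le_trans (_ : _ <= \int[P]_w (\sum_(k < n.+1) \1_(first_hit k) w * Z k w)%:E)%E _.
  apply: ge0_le_integral => //.
  - by move=> w _; rewrite lee_fin mulr_ge0 // ltW.
  - by apply/measurable_EFinP; apply: measurable_funM => //; exact: measurable_indic.
  - apply/measurable_EFinP; apply: measurable_sum => k.
    by apply/measurable_EFinP; exact: mfirst.
  - by move=> w _; rewrite lee_fin.
under eq_integral do rewrite -sumEFin.
by rewrite ge0_integral_sum // => k w _; rewrite lee_fin.
Qed.

End maximal_inequality.
Section exponential_supermartingale.
Variables (P : probability T R) (xi Yneg : nat -> T -> R) (b lam : R).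
Hypotheses (hxi : forall i, (1 <= i <= n)%N ->
     [/\ G_measurable (F i) (xi i), P.-integrable setT (EFin \o xi i) &
         exists Y, is_cond_exp P (F i.-1) (xi i) Y /\ {ae P, forall w, Y w <= 0}])
  (hYneg : forall i, (1 <= i <= n)%N ->
     is_cond_exp P (F i.-1) (fun w => neg_part (xi i w) `^ b) (Yneg i))
  (hb : 1 < b < 2) (lam0 : 0 < lam).

Let sum_xi k w := \sum_(1 <= i < k.+1) xi i w.
Let sum_V k w := \sum_(1 <= i < k.+1) (Yneg i w + pos_part (xi i w) `^ b).

Definition exp_process k w := expR (lam * sum_xi k w - lam `^ b * sum_V k w).

Let adapted_sum_xi k : (k <= n)%N -> G_measurable (F k) (sum_xi k).
Proof.
move=> kn; apply: (G_measurable_partial_sum (f := xi) kn) => i /andP[i1 ik].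
have i1n : (1 <= i <= n)%N by rewrite i1 (leq_trans ik).
by case: (hxi i1n).
Qed.

Let adapted_sum_V k : (k <= n)%N -> G_measurable (F k) (sum_V k).
Proof.
move=> kn; apply: (G_measurable_partial_sum
  (f := fun i w => Yneg i w + pos_part (xi i w) `^ b) kn) => i /andP[i1 ik].
have i1n : (1 <= i <= n)%N by rewrite i1 (leq_trans ik).
have iN := leq_trans ik kn; have [mxi _ _] := hxi i1n; have [mY _ _] := hYneg i1n.
apply/(G_measurableP (proj1 (sF iN))); apply: measurable_funD.
  apply/(G_measurableP (proj1 (sF iN))).
  by apply: G_measurable_filtration (leq_pred i) iN _.
apply: (measurableT_comp (measurable_powR b)); apply: measurable_maxr; last exact: measurable_cst.
exact/(G_measurableP (proj1 (sF iN))).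
Qed.

Lemma measurable_deviation_event (x y : R) :
  measurable [set w | exists k, (1 <= k <= n)%N /\ (x <= sum_xi k w)%R /\ (sum_V k w <= y)%R].
Proof.
have -> : [set w | exists k, (1 <= k <= n)%N /\ (x <= sum_xi k w)%R /\ (sum_V k w <= y)%R]
  = \bigcup_(k in [set k | (1 <= k <= n)%N])
      (sum_xi k @^-1` `[x, +oo[ `&` sum_V k @^-1` `]-oo, y]).
  apply/seteqP; split => w /=.
    by move=> [k [kn [h1 h2]]]; exists k => //=; rewrite !in_itv /= andbT.
  by move=> [k kn]; rewrite /= !in_itv /= andbT; exists k.
apply: bigcup_measurable => k /andP[_ kn]; apply: measurableI; apply: (proj2 (sF kn)).
  exact: adapted_sum_xi kn _ (measurable_itv _).
exact: adapted_sum_V kn _ (measurable_itv _).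
Qed.

Lemma exp_process_adapted k : (k <= n)%N -> G_measurable (F k) (exp_process k).
Proof.
move=> kn; have sFk := proj1 (sF kn); apply/(G_measurableP sFk).
apply: measurableT_comp; first exact: measurable_expR.
apply: measurable_funB; apply: measurable_funM; try exact: measurable_cst.
  exact/(G_measurableP sFk)/adapted_sum_xi.
exact/(G_measurableP sFk)/adapted_sum_V.
Qed.

Let exp_processS k w : exp_process k.+1 w = exp_process k w *
  expR (lam * xi k.+1 w - lam `^ b * (Yneg k.+1 w + pos_part (xi k.+1 w) `^ b)).
Proof.
by rewrite /exp_process /sum_xi /sum_V !(big_nat_recr k.+1) //= -expRD; congr expR; ring.
Qed.

Lemma exp_process_super k B : (k < n)%N -> F k B ->
  (\int[P]_w (\1_B w * exp_process k.+1 w)%:E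
   <= \int[P]_w (\1_B w * exp_process k w)%:E)%E.
Proof.
move=> kn FB; have kn' := ltnW kn; have sFk := proj1 (sF kn').
have k1n : (1 <= k.+1 <= n)%N by rewrite kn.
have [_ ixi [Y [cY aeY]]] := hxi k1n.
under eq_integral do rewrite exp_processS mulrA.
apply: (exp_supermartingale_step sFk (proj2 (sF kn')) hb lam0 _ _ ixi cY aeY (hYneg k1n)).
  by move=> w; rewrite mulr_ge0 // ?indicE // ltW // expR_gt0.
apply: measurable_funM; first by apply: measurable_indic; rewrite (g_measurableE sFk).
by apply/(G_measurableP sFk); exact: exp_process_adapted.
Qed.

Lemma exp_process0 w : exp_process 0 w = 1.
Proof. by rewrite /exp_process /sum_xi /sum_V !big_geq // !mulr0 subr0 expR0. Qed.

End exponential_supermartingale.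
End filtration.

(* [lam] maximises [lam x - lam^b v^b], so this is the Legendre transform of
   [lam |-> (lam v)^b] evaluated at [x]. *)
Lemma legendre_powR (R : realType) (b x v : R) : 1 < b -> 0 < x -> 0 < v ->
  let lam := (x / (b * v `^ b)) `^ (1 / (b - 1)) in
  lam * x - lam `^ b * v `^ b =
  b `^ (1 / (1 - b)) * (1 - b^-1) * (x / v) `^ (b / (b - 1)).
Proof.
move=> b1 x0 v0 lam.
have b0 : 0 < b by exact: lt_trans ltr01 b1.
have bm1 : b - 1 != 0 by rewrite subr_eq0 gt_eqF.
set p := 1 / (b - 1).
have hp : b * p = p + 1 by rewrite /p; field.
have b1' : 1 - b != 0 by rewrite subr_eq0 lt_eqF.
have hq : 1 / (1 - b) = - p by rewrite /p; field; rewrite bm1 b1'.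
have hr : b / (b - 1) = p + 1 by rewrite -hp /p; field.
have vb : 0 < v `^ b := powR_gt0 _ v0.
set L := ln (x / (b * v `^ b)).
have eL : expR L = x / (b * v `^ b) by rewrite lnK // posrE divr_gt0 // mulr_gt0.
have powRE (a r : R) : 0 < a -> a `^ r = expR (r * ln a) by move=> a0; rewrite /powR gt_eqF.
have hlam : lam = expR (p * L) by rewrite /lam powRE // divr_gt0 // mulr_gt0.
have hlamb : lam `^ b = expR (p * L) * (x / (b * v `^ b)).
  by rewrite hlam powRE ?expR_gt0 // expRK -eL -expRD; congr expR; rewrite mulrA hp; ring.
rewrite hlamb hq hr {1}hlam.
have -> : expR (p * L) * x - expR (p * L) * (x / (b * v `^ b)) * v `^ b
  = expR (p * L) * x * (1 - b^-1).
  by field; rewrite (gt_eqF b0) (gt_eqF vb).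
rewrite [RHS]mulrAC; congr (_ * _).
rewrite !powRE ?divr_gt0 // -{1}(lnK (x:=x)) ?posrE // -!expRD.
congr expR.
rewrite /L !lnM ?posrE ?invr_gt0 ?mulr_gt0 // !lnV ?posrE ?mulr_gt0 //.
rewrite lnM ?posrE // ln_powR.
apply/eqP; rewrite -subr_eq0; apply/eqP.
transitivity (ln v * (p + 1 - b * p)); first ring.
by rewrite hp subrr mulr0.
Qed.

Theorem theorem2p2 (d : measure_display) (T : measurableType d) (R : realType)
  (P : probability T R) (n : nat) (F : nat -> set (set T))
  (xi : nat -> T -> R) (beta : R) :
  (* filtration {emptyset, Omega} = F_0 <= F_1 <= ... <= F_n <= F *)
  F 0%N = [set set0; setT] ->
  (forall i, (i <= n)%N -> sub_sigma_field (F i)) ->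
  (forall i, (i < n)%N -> F i `<=` F i.+1) ->
  (* supermartingale differences *)
  (forall i, (1 <= i <= n)%N ->
     [/\ G_measurable (F i) (xi i),
         P.-integrable setT (EFin \o xi i) &
         exists Y, is_cond_exp P (F i.-1) (xi i) Y /\
                   {ae P, forall w, Y w <= 0}]) ->
  1 < beta < 2 ->
  (forall i, (1 <= i <= n)%N ->
     (\int[P]_w ((`|xi i w| `^ beta)%:E) < +oo)%E) ->
  (* Yneg i is a version of E((xi_i^-)^beta | F_{i-1}) *)
  forall Yneg : nat -> T -> R,
  (forall i, (1 <= i <= n)%N ->
     is_cond_exp P (F i.-1) (fun w => neg_part (xi i w) `^ beta) (Yneg i)) ->
  forall x v : R, 0 < x -> 0 < v ->
  let Ssum k w := \sum_(1 <= i < k.+1) xi i w in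
  let G0 k w := \sum_(1 <= i < k.+1)
                   (Yneg i w + pos_part (xi i w) `^ beta) in
  let C := beta `^ (1 / (1 - beta)) * (1 - beta^-1) in
  (P [set w | exists k, (1 <= k <= n)%N /\ (x <= Ssum k w)%R /\ (G0 k w <= v `^ beta)%R]
    <= (expR (- C * (x / v) `^ (beta / (beta - 1))))%:E)%E.
Proof.
move=> _ sF FS hxi hb _ Yneg hYneg x v x0 v0; cbv zeta.
have b1 : 1 < beta by case/andP: hb.
pose lam := (x / (beta * v `^ beta)) `^ (1 / (beta - 1)).
have lam0 : 0 < lam.
  by rewrite powR_gt0 // divr_gt0 // mulr_gt0 ?powR_gt0 // (lt_trans ltr01).
pose th := lam * x - lam `^ beta * v `^ beta.
have adaptedZ := exp_process_adapted sF FS lam hxi hYneg.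
have ville := supermartingale_maximal_ineq sF FS (Z := exp_process xi Yneg beta lam)
  (fun k w => ltW (expR_gt0 _)) adaptedZ
  (exp_process_super sF FS hxi hYneg hb lam0) (expR_gt0 th).
have Z0_mass : (\int[P]_w (exp_process xi Yneg beta lam 0 w)%:E = 1)%E.
  under eq_integral do rewrite exp_process0.
  by rewrite integral_cst // mul1e; exact: probability_setT.
rewrite Z0_mass in ville.
have eth : th = beta `^ (1 / (1 - beta)) * (1 - beta^-1) * (x / v) `^ (beta / (beta - 1))
  := legendre_powR b1 x0 v0.
rewrite mulNr -eth expRN -(mule1 ((expR th)^-1)%:E) lee_pdivlMl ?expR_gt0 //.
apply: le_trans ville; apply: lee_wpmul2l; first by rewrite lee_fin ltW ?expR_gt0.
apply: le_measure.
- exact/mem_set/(measurable_deviation_event sF FS hxi hYneg).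
- exact/mem_set/(measurable_crossing sF (expR th) adaptedZ).
move=> w [k [/andP[_ kn] [hS hG]]]; exists k => //; rewrite ler_expR /th.
by apply: lerB; rewrite ler_pM2l // powR_gt0.
Qed.
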